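(* Let $G$ be a finitely generated group, $H\le G$ a subgroup, and $\Omega\le\operatorname{Aut}(G)$ such that $\phi(H)=H$ for all $\phi\in\Omega$. Let $P=\{\phi|_H:\phi\in\Omega\}\le\operatorname{Aut}(H)$. Then $\alpha_{H^P\subseteq G}\preccurlyeq\alpha_{G^\Omega}$.
   Context: Fix a finite generating set $\Sigma$ of $G$ and the word length $|\cdot|_\Sigma$. For $\Omega\le\operatorname{Aut}(G)$, the $\Omega$-automorphic growth function sends $n$ to the number of $\Omega$-orbits of $G$ containing an element of length at most $n$; $\alpha_{G^\Omega}$ is its $\sim$-class. For a subset $U\subseteq G$ and a group $P$ of permutations of $U$, the relative $P$-automorphic growth $\alpha_{U^P\subseteq G}$ is the $\sim$-class of the function sending $n$ to the number of $P$-orbits of $U$ containing an element $u$ with $|u|_\Sigma\le n$ (word length measured in $G$). For non-decreasing non-zero $f,g\colon\mathbb{N}\to\mathbb{N}$, $f\preccurlyeq g$ means there is $\lambda\in\mathbb{N}\setminus\{0\}$ with $f(n)\le\lambda g(\lambda n+\lambda)+\lambda$ for all $n$, and $f\sim g$ means $f\preccurlyeq g$ and $g\preccurlyeq f$. These classes do not depend on $\Sigma$. *)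

From Stdlib Require Import Arith List ClassicalEpsilon.
Import ListNotations.
Set Implicit Arguments.

Record Group := {
  carrier :> Type;
  gmul : carrier -> carrier -> carrier;
  gone : carrier;
  ginv : carrier -> carrier;
  gmulA : forall x y z, gmul x (gmul y z) = gmul (gmul x y) z;
  gmul1g : forall x, gmul gone x = x;
  gmulg1 : forall x, gmul x gone = x;
  gmulVg : forall x, gmul (ginv x) x = gone;
  gmulgV : forall x, gmul x (ginv x) = gone
}.

Section Defs.
Variable G : Group.

Definition is_subgroup (H : G -> Prop) : Prop :=
  H (gone G) /\ (forall x y, H x -> H y -> H (gmul G x y)) /\
  (forall x, H x -> H (ginv G x)).

Definition is_automorphism (phi : G -> G) : Prop :=
  (forall x y, phi (gmul G x y) = gmul G (phi x) (phi y)) /\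
  (forall x y, phi x = phi y -> x = y) /\
  (forall y, exists x, phi x = y).

Definition is_aut_subgroup (Omega : (G -> G) -> Prop) : Prop :=
  (forall phi, Omega phi -> is_automorphism phi) /\
  Omega (fun x => x) /\
  (forall phi psi, Omega phi -> Omega psi -> Omega (fun x => phi (psi x))) /\
  (forall phi, Omega phi -> exists psi, Omega psi /\
      (forall x, psi (phi x) = x) /\ (forall x, phi (psi x) = x)).

Fixpoint eval_word (w : list (bool * G)) : G :=
  match w with
  | [] => gone G
  | (b, s) :: w' => gmul G (if b then ginv G s else s) (eval_word w')
  end.

Definition word_over (Sigma : list G) (w : list (bool * G)) : Prop :=
  forall p, In p w -> In (snd p) Sigma.

Definition generates (Sigma : list G) : Prop :=
  forall g, exists w, word_over Sigma w /\ eval_word w = g.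

Definition wlen_le (Sigma : list G) (g : G) (n : nat) : Prop :=
  exists w, word_over Sigma w /\ length w <= n /\ eval_word w = g.

End Defs.

Definition is_count (X : Type) (R : X -> X -> Prop) (B : X -> Prop) (k : nat) : Prop :=
  exists L : list X, length L = k /\ (forall x, In x L -> B x) /\
    ForallOrdPairs (fun a b => ~ R a b) L /\
    (forall x, B x -> exists y, In y L /\ R y x).

Definition count_classes (X : Type) (R : X -> X -> Prop) (B : X -> Prop) : nat :=
  epsilon (inhabits 0) (fun k => is_count R B k).

(* Omega-automorphic growth function: n |-> number of Omega-orbits of G
   containing an element of length <= n. *)
Definition aut_growth (G : Group) (Sigma : list G) (Omega : (G -> G) -> Prop)
  (n : nat) : nat :=
  count_classes (fun x y => exists phi, Omega phi /\ phi x = y)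
                (fun g => @wlen_le G Sigma g n).

(* Relative P-automorphic growth of U ⊆ G, P a group of permutations of U;
   word length measured in G. *)
Definition rel_growth (G : Group) (Sigma : list G) (U : G -> Prop)
  (P : ({x : G | U x} -> {x : G | U x}) -> Prop) (n : nat) : nat :=
  count_classes (fun u v => exists p, P p /\ p u = v)
                (fun u => @wlen_le G Sigma (proj1_sig u) n).

Definition preccurlyeq (f g : nat -> nat) : Prop :=
  exists lam, lam <> 0 /\ forall n, f n <= lam * g (lam * n + lam) + lam.

Definition restrictions (G : Group) (H : G -> Prop) (Omega : (G -> G) -> Prop)
  (p : {x : G | H x} -> {x : G | H x}) : Prop :=
  exists phi, Omega phi /\ forall u, proj1_sig (p u) = phi (proj1_sig u).

Arguments is_subgroup {G} H.
Arguments is_automorphism {G} phi.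
Arguments is_aut_subgroup {G} Omega.
Arguments generates {G} Sigma.
Arguments wlen_le {G} Sigma g n.
Arguments eval_word {G} w.
Arguments word_over {G} Sigma w.
Arguments aut_growth {G} Sigma Omega n.
Arguments rel_growth {G} Sigma U P n.
Arguments restrictions {G} H Omega p.

(* Restricting an automorphism of Omega to H sends u to v exactly when the
   automorphism itself sends u to v, so two points of H lie in the same
   P-orbit iff they lie in the same Omega-orbit.  Hence sending each P-orbit
   of the ball of radius n in H to the Omega-orbit containing it is injective,
   and the number of P-orbits is at most the number of Omega-orbits meeting
   the ball of radius n (and so radius n + 1) of G.  Balls are finite, which
   is all that is needed for these counts to exist. *)
From Stdlib Require Import List Lia Relations Classical ClassicalEpsilon ProofIrrelevance.
Import ListNotations.
Set Implicit Arguments.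

Definition finite_pred {X : Type} (A : X -> Prop) : Prop :=
  exists C : list X, forall x, A x -> In x C.

Lemma finite_preimage_inj (X Y : Type) (f : X -> Y) (B : Y -> Prop) :
  (forall a b, f a = f b -> a = b) ->
  finite_pred B -> finite_pred (fun x => B (f x)).
Proof.
  intros f_inj [C HC].
  set (preimage y := match excluded_middle_informative (exists x, f x = y) with
                     | left e => [proj1_sig (constructive_indefinite_description _ e)]
                     | right _ => []
                     end).
  exists (flat_map preimage C). intros x Bfx.
  apply in_flat_map. exists (f x). split; [now apply HC|].
  unfold preimage. destruct excluded_middle_informative as [e|ne].
  - destruct constructive_indefinite_description as [x' Ex']. left. now apply f_inj.
  - exfalso. apply ne. now exists x.
Qed.

Lemma proj1_sig_inj (X : Type) (P : X -> Prop) (u v : {x | P x}) :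
  proj1_sig u = proj1_sig v -> u = v.
Proof. apply eq_sig_hprop. intros. apply proof_irrelevance. Qed.

Section Counting.
Variable X : Type.
Variable R : relation X.
Hypothesis R_equiv : equivalence X R.

Lemma inequivalent_length_le (L1 L2 : list X) :
  ForallOrdPairs (fun a b => ~ R a b) L1 ->
  (forall x, In x L1 -> exists y, In y L2 /\ R y x) -> length L1 <= length L2.
Proof.
  revert L2. induction L1 as [|x L1 IH]; intros L2 L1_ineq L1_cov; simpl; [lia|].
  inversion L1_ineq as [|? ? x_ineq L1_ineq']; subst.
  destruct (L1_cov x (or_introl eq_refl)) as [y [Hy Ryx]].
  destruct (in_split _ _ Hy) as [l1 [l2 ->]].
  assert (length L1 <= length (l1 ++ l2)).
  { apply IH; [exact L1_ineq'|]. intros z Hz.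
    destruct (L1_cov z (or_intror Hz)) as [y' [Hy' Ry'z]].
    exists y'. split; [|exact Ry'z].
    apply in_app_or in Hy'. destruct Hy' as [Hy'|[<-|Hy']]; try (apply in_or_app; auto).
    exfalso. rewrite Forall_forall in x_ineq. apply (x_ineq z Hz).
    apply (equiv_trans _ _ R_equiv) with y; [apply (equiv_sym _ _ R_equiv)|]; assumption. }
  rewrite length_app in *; simpl; lia.
Qed.

(* Greedy choice of representatives along a finite list covering A. *)
Lemma is_count_exists (A : X -> Prop) : finite_pred A -> exists k, is_count R A k.
Proof.
  intros [C HC].
  assert (exists L, (forall x, In x L -> A x) /\ ForallOrdPairs (fun a b => ~ R a b) L /\
            (forall c, In c C -> A c -> exists y, In y L /\ R y c))
    as [L [L_in [L_ineq L_cov]]].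
  { clear HC. induction C as [|c C [L [L_in [L_ineq L_cov]]]].
    - exists []. repeat split; [simpl; tauto|constructor|simpl; tauto].
    - destruct (classic (A c /\ ~ exists y, In y L /\ R y c)) as [[Ac new_c]|old_c].
      + exists (c :: L). repeat split.
        * intros x [<-|Hx]; auto.
        * constructor; [|exact L_ineq]. rewrite Forall_forall. intros b Hb Rcb.
          apply new_c. exists b. split; [exact Hb|now apply (equiv_sym _ _ R_equiv)].
        * intros c' [<-|Hc'] Ac'.
          -- exists c. split; [now left|apply (equiv_refl _ _ R_equiv)].
          -- destruct (L_cov c' Hc' Ac') as [y [Hy Ry]]. exists y. split; [now right|exact Ry].
      + exists L. repeat split; [exact L_in|exact L_ineq|].
        intros c' [<-|Hc'] Ac'; [|now apply L_cov].
        apply NNPP. intro H. apply old_c. split; assumption. }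
  exists (length L), L. repeat split; [exact L_in|exact L_ineq|].
  intros x Ax. apply L_cov; [apply HC|]; exact Ax.
Qed.

Lemma count_classes_spec (A : X -> Prop) :
  finite_pred A -> is_count R A (count_classes R A).
Proof. intro A_fin. unfold count_classes. apply epsilon_spec, is_count_exists, A_fin. Qed.

End Counting.

Lemma count_classes_le_comap (X Y : Type) (R : relation X) (S : relation Y)
  (A : X -> Prop) (B : Y -> Prop) (f : X -> Y) :
  equivalence Y S -> (forall a b, R a b <-> S (f a) (f b)) ->
  finite_pred A -> finite_pred B -> (forall a, A a -> B (f a)) ->
  count_classes R A <= count_classes S B.
Proof.
  intros S_equiv R_iff A_fin B_fin A_B.
  assert (R_equiv : equivalence X R).
  { destruct (inverse_image_of_equivalence _ _ f S S_equiv) as [refl trans sym].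
    split.
    - intros a. apply R_iff, refl.
    - intros a b c Rab Rbc. apply R_iff, (trans a b c); apply R_iff; assumption.
    - intros a b Rab. apply R_iff, (sym a b), R_iff, Rab. }
  destruct (count_classes_spec R_equiv A_fin) as [L1 [<- [L1_in [L1_ineq _]]]].
  destruct (count_classes_spec S_equiv B_fin) as [L2 [<- [_ [_ L2_cov]]]].
  rewrite <- (length_map f L1).
  apply (inequivalent_length_le S_equiv).
  - clear L1_in. induction L1_ineq as [|a L1 a_ineq _ IH]; simpl; [constructor|].
    constructor; [|exact IH]. apply Forall_map. eapply Forall_impl; [|exact a_ineq].
    intros b nRab Sab. apply nRab, R_iff, Sab.
  - intros y Hy. apply in_map_iff in Hy. destruct Hy as [x [<- Hx]].
    apply L2_cov, A_B, L1_in, Hx.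
Qed.

Definition orbit_rel {X : Type} (P : (X -> X) -> Prop) (x y : X) : Prop :=
  exists p, P p /\ p x = y.

Lemma orbit_rel_equivalence (G : Group) (Omega : (G -> G) -> Prop) :
  is_aut_subgroup Omega -> equivalence G (orbit_rel Omega).
Proof.
  intros [_ [Omega_id [Omega_comp Omega_inv]]]. split.
  - intro x. now exists (fun x => x).
  - intros x y z [phi [Hphi <-]] [psi [Hpsi <-]]. now exists (fun x => psi (phi x)); auto.
  - intros x y [phi [Hphi <-]]. destruct (Omega_inv phi Hphi) as [psi [Hpsi [psiK _]]].
    now exists psi.
Qed.

Lemma orbit_rel_restrictions (G : Group) (H : G -> Prop) (Omega : (G -> G) -> Prop) :
  (forall phi, Omega phi -> forall x, H x -> H (phi x)) ->
  forall u v, orbit_rel (restrictions H Omega) u v <->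
              orbit_rel Omega (proj1_sig u) (proj1_sig v).
Proof.
  intros Omega_stab u v. split.
  - intros [p [[phi [Hphi p_phi]] <-]]. exists phi. split; [exact Hphi|]. now rewrite p_phi.
  - intros [phi [Hphi phi_uv]].
    exists (fun w => exist _ (phi (proj1_sig w)) (Omega_stab phi Hphi _ (proj2_sig w))).
    split; [now exists phi|].
    now apply proj1_sig_inj.
Qed.

Section Balls.
Variable G : Group.
Variable Sigma : list G.

Definition letters : list (bool * G) :=
  flat_map (fun s => [(false, s); (true, s)]) Sigma.

Fixpoint words_upto (n : nat) : list (list (bool * G)) :=
  match n with
  | 0 => [[]]
  | S n => words_upto n ++ flat_map (fun p => map (cons p) (words_upto n)) letters
  end.

Lemma nil_in_words_upto n : In [] (words_upto n).
Proof. induction n; simpl; auto using in_or_app. Qed.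

Lemma in_words_upto n w : word_over Sigma w -> length w <= n -> In w (words_upto n).
Proof.
  revert w. induction n as [|n IH]; intros w w_over w_len.
  - destruct w; simpl in *; [now left|lia].
  - simpl. apply in_or_app. destruct w as [|p w]; [left; apply nil_in_words_upto|right].
    apply in_flat_map. exists p. split.
    + apply in_flat_map. exists (snd p). split; [apply w_over; now left|].
      destruct p as [[] s]; simpl; auto.
    + apply in_map, IH; [intros q Hq; apply w_over; now right|simpl in w_len; lia].
Qed.

Lemma ball_finite n : finite_pred (fun g => wlen_le Sigma g n).
Proof.
  exists (map eval_word (words_upto n)). intros g [w [w_over [w_len <-]]].
  now apply in_map, in_words_upto.
Qed.

Lemma wlen_le_S g n : wlen_le Sigma g n -> wlen_le Sigma g (S n).
Proof. intros [w [w_over [w_len w_g]]]. exists w. auto. Qed.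

End Balls.

Theorem mainTheorem14 (G : Group) (Sigma : list G) (H : G -> Prop)
  (Omega : (G -> G) -> Prop) :
  generates Sigma ->
  is_subgroup H ->
  is_aut_subgroup Omega ->
  (forall phi, Omega phi ->
     (forall x, H x -> H (phi x)) /\ (forall y, H y -> exists x, H x /\ phi x = y)) ->
  preccurlyeq (rel_growth Sigma H (restrictions H Omega))
              (aut_growth Sigma Omega).
Proof.
  intros _ _ Omega_aut Omega_H.
  exists 1. split; [lia|]. intro n.
  assert (count_le : rel_growth Sigma H (restrictions H Omega) n <=
                     aut_growth Sigma Omega (S n)).
  { apply (count_classes_le_comap _ (@proj1_sig G H)).
    - now apply orbit_rel_equivalence.
    - apply orbit_rel_restrictions. intros phi Hphi. apply (Omega_H phi Hphi).
    - apply (@finite_preimage_inj _ _ (@proj1_sig G H) (fun g => wlen_le Sigma g n));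
        [|apply ball_finite].
      apply proj1_sig_inj.
    - apply ball_finite.
    - intros u. apply wlen_le_S. }
  replace (1 * n + 1) with (S n) by lia. lia.
Qed.
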